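(* Let $\varphi\colon\mathcal{M}\to\mathcal{X}$ be a smooth lift that does not satisfy ''2 $\Rightarrow$ 1'' at $y\in\mathcal{M}$, and let $x=\varphi(y)$. Then $W_y\setminus(\mathrm{T}_x\mathcal{X})^*\neq\emptyset$, and for every $w$ in this set there exists $\alpha>0$ such that, with $f(x')=\langle w,x'\rangle+\tfrac{\alpha}{2}\|x'-x\|^2$, the point $y$ is 2-critical for $g=f\circ\varphi$ but $x$ is not stationary for $f$ on $\mathcal{X}$.
   Context: $\mathcal{E}$ is a finite-dimensional real inner product space, $\mathcal{M}$ a smooth manifold, and $\varphi\colon\mathcal{M}\to\mathcal{E}$ smooth with $\varphi(\mathcal{M})=\mathcal{X}$. Tangent cone: $\mathrm{T}_x\mathcal{X}=\{\lim(x_i-x)/\tau_i: x_i\in\mathcal{X},\tau_i>0,\tau_i\to0\}$; $K^*=\{u:\langle u,v\rangle\ge0\ \forall v\in K\}$; $x$ is stationary for $f$ on $\mathcal{X}$ if $\nabla f(x)\in(\mathrm{T}_x\mathcal{X})^*$. $y$ is 2-critical for $g=f\circ\varphi$ if $(g\circ c)'(0)=0$ and $(g\circ c)''(0)\ge0$ for all smooth curves $c$ in $\mathcal{M}$ with $c(0)=y$. ''2 $\Rightarrow$ 1'' at $y$: for every twice differentiable $f\colon\mathcal{E}\to\mathbb{R}$, if $y$ is 2-critical for $g$ then $\varphi(y)$ is stationary. $W_y$ is the set of $w\in\mathcal{E}$ for which some twice differentiable $f\colon\mathcal{E}\to\mathbb{R}$ has $\nabla f(x)=w$ and $y$ 2-critical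 for $f\circ\varphi$. *)

From HB Require Import structures.
From mathcomp Require Import all_boot all_order all_algebra.
From mathcomp Require Import all_classical all_reals all_analysis.
Set Implicit Arguments. Unset Strict Implicit. Unset Printing Implicit Defensive.
Import Order.TTheory GRing.Theory Num.Theory.
Import numFieldNormedType.Exports.
Local Open Scope classical_set_scope.
Local Open Scope ring_scope.

Section Defs.
Variable R : realType.

Fixpoint iter_dir_deriv (V W : normedModType R) (vs : seq V) (f : V -> W)
  : V -> W :=
  match vs with
  | [::] => f
  | v :: vs' => fun x => 'D_v (iter_dir_deriv vs' f) x
  end.

Definition smooth_on (V W : normedModType R) (U : set V) (f : V -> W) :=
  open U /\
  forall vs : seq V,
    (forall x v, U x -> derivable (iter_dir_deriv vs f) x v) /\
    {within U, continuous (iter_dir_deriv vs f)}.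

Record chart (m : nat) (M : Type) := Chart {
  cdom : set M;
  cmap : M -> 'rV[R]_m;
  cinv : 'rV[R]_m -> M
}.

Definition is_chart (m : nat) (M : topologicalType) (a : chart m M) :=
  [/\ open (cdom a), open (cmap a @` cdom a),
      (forall p, cdom a p -> cinv a (cmap a p) = p),
      (forall z, (cmap a @` cdom a) z -> cmap a (cinv a z) = z) &
      {within cdom a, continuous (cmap a)} /\
      {within cmap a @` cdom a, continuous (cinv a)}].

Definition smooth_atlas (m : nat) (M : topologicalType) (A : set (chart m M)) :=
  [/\ hausdorff_space M, @second_countable M,
      (forall a, A a -> is_chart a),
      (forall p : M, exists2 a, A a & cdom a p) &
      (forall a b, A a -> A b ->
         smooth_on (cmap a @` (cdom a `&` cdom b)) (cmap b \o cinv a))].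

Definition smooth_map (m n : nat) (M : topologicalType) (A : set (chart m M))
  (phi : M -> 'rV[R]_n) :=
  forall a, A a -> smooth_on (cmap a @` cdom a) (phi \o cinv a).

Definition smooth_curve (m : nat) (M : topologicalType) (A : set (chart m M))
  (c : R^o -> M) :=
  continuous c /\
  forall a, A a -> smooth_on (c @^-1` cdom a) (cmap a \o c).

Definition dotp (n : nat) (u v : 'rV[R]_n) : R := (u *m v^T) 0 0.

(* gradient w.r.t. the inner product dotp: <grad f x, v> = Df(x)[v] *)
Definition grad (n : nat) (f : 'rV[R]_n -> R^o) (x : 'rV[R]_n) : 'rV[R]_n :=
  \row_(i < n) ('d f x (delta_mx 0 i : 'rV[R]_n) : R).

Definition twice_differentiable (n : nat) (f : 'rV[R]_n -> R^o) :=
  (forall x, differentiable f x) /\ (forall x, differentiable (grad f) x).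

Definition tangent_cone (n : nat) (X : set 'rV[R]_n) (x : 'rV[R]_n)
  : set 'rV[R]_n :=
  [set v | exists (xs : nat -> 'rV[R]_n) (tau : nat -> R),
      [/\ (forall i, X (xs i)), (forall i, 0 < tau i),
          tau @ \oo --> (0 : R) &
          (fun i => (tau i)^-1 *: (xs i - x)) @ \oo --> v]].

Definition dual_cone (n : nat) (K : set 'rV[R]_n) : set 'rV[R]_n :=
  [set u | forall v, K v -> 0 <= dotp u v].

Definition stationary (n : nat) (X : set 'rV[R]_n) (f : 'rV[R]_n -> R^o)
  (x : 'rV[R]_n) := dual_cone (tangent_cone X x) (grad f x).

Definition two_critical (m n : nat) (M : topologicalType) (A : set (chart m M))
  (phi : M -> 'rV[R]_n) (f : 'rV[R]_n -> R^o) (y : M) :=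
  forall c : R^o -> M, smooth_curve A c -> c 0 = y ->
    let h : R^o -> R^o := fun t => f (phi (c t)) in
    derive1 h 0 = 0 /\ 0 <= derive1 (derive1 h) 0.

Definition two_implies_one (m n : nat) (M : topologicalType)
  (A : set (chart m M)) (phi : M -> 'rV[R]_n) (y : M) :=
  forall f : 'rV[R]_n -> R^o, twice_differentiable f ->
    two_critical A phi f y -> stationary (phi @` setT) f (phi y).

Definition W_set (m n : nat) (M : topologicalType) (A : set (chart m M))
  (phi : M -> 'rV[R]_n) (y : M) : set 'rV[R]_n :=
  [set w | exists f : 'rV[R]_n -> R^o,
      [/\ twice_differentiable f, grad f (phi y) = w & two_critical A phi f y]].

End Defs.

(* If w = grad f0 (x) for some f0 making y 2-critical, then along any smooth
   curve c through y, with p = phi o c, the chain rule gives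
     (f o p)'(0)  = <grad f(x), p'(0)>,
     (f o p)''(0) = <Hess f(x) p'(0), p'(0)> + <grad f(x), p''(0)>.
   The quadratic model f(x') = <w, x'> + alpha/2 |x' - x|^2 has grad f(x) = w
   and Hess f(x) = alpha I.  Once alpha bounds the quadratic form of
   Hess f0(x), f has the same first derivative as f0 along every curve and a
   second derivative at least as large, so y stays 2-critical for f o phi,
   while x is not stationary for f since grad f(x) = w lies outside
   (T_x X)^*.  Such a w exists precisely because "2 => 1" fails.
   The analytic input is that p is twice differentiable: in a chart, p is
   F o q with F and q having continuous directional derivatives of all orders,
   and a map with continuous partial derivatives is Frechet differentiable. *)

From HB Require Import structures.
From mathcomp Require Import all_boot all_order all_algebra.
From mathcomp Require Import all_classical all_reals all_analysis.
From mathcomp Require Import ring lra.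
Set Implicit Arguments. Unset Strict Implicit. Unset Printing Implicit Defensive.
Import Order.TTheory GRing.Theory Num.Theory.
Import numFieldNormedType.Exports.
Local Open Scope classical_set_scope.
Local Open Scope ring_scope.

Section MatrixNorm.
Variables (R : realType) (p q : nat).
Implicit Type M : 'M[R]_(p, q).

Lemma coord_le_normr M i j : `|M i j| <= `|M|.
Proof.
rewrite [leRHS]/Num.Def.normr /= mx_normrE.
exact: (le_bigmax _ (fun ij : 'I_p * 'I_q => `|M ij.1 ij.2|) (i, j)).
Qed.

Lemma normr_le_coords M c : 0 <= c -> (forall i j, `|M i j| <= c) -> `|M| <= c.
Proof.
move=> c0 Mc; rewrite [leLHS]/Num.Def.normr /= mx_normrE.
by apply: bigmax_le => // -[i j] _; apply: Mc.
Qed.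

End MatrixNorm.

Section DotProduct.
Variables (R : realType) (n : nat).
Implicit Types u v : 'rV[R]_n.

Lemma dotpE u v : dotp u v = \sum_j u 0 j * v 0 j.
Proof. by rewrite /dotp mxE; apply: eq_bigr => j _; rewrite mxE. Qed.

Lemma dotpC u v : dotp u v = dotp v u.
Proof. by rewrite !dotpE; apply: eq_bigr => j _; rewrite mulrC. Qed.

Lemma dotp_is_linear u : linear (dotp u : 'rV[R]_n -> R^o).
Proof.
move=> a v1 v2; rewrite !dotpE scaler_sumr -big_split; apply: eq_bigr => j _ /=.
by rewrite !mxE mulrDr mulrCA.
Qed.

HB.instance Definition _ u :=
  GRing.isLinear.Build R 'rV[R]_n R^o _ (dotp u) (dotp_is_linear u).

Lemma dotpZl a u v : dotp (a *: u) v = a * dotp u v.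
Proof. by rewrite dotpC linearZ dotpC. Qed.

Lemma dotp_delta u i : dotp u 'e_i = u 0 i.
Proof.
rewrite dotpE (bigD1 i) //= big1 => [|j ji]; first by rewrite !mxE !eqxx mulr1 addr0.
by rewrite !mxE (negbTE ji) mulr0.
Qed.

Lemma dotp_continuous u : continuous (dotp u : 'rV[R]_n -> R^o).
Proof.
move=> v; apply: differentiable_continuous.
have -> : dotp u = \sum_j (( *:%R (u 0 j)) \o (fun h : 'rV[R]_n => h 0 j)).
  by apply/funext => h; rewrite dotpE fct_sumE.
apply: differentiable_sum => j; apply: differentiable_comp => //.
exact: differentiable_coord.
Qed.

Lemma sqr_coord_le_dotp v i : v 0 i ^+ 2 <= dotp v v.
Proof.
rewrite dotpE (bigD1 i) //= expr2 lerDl.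
by apply: sumr_ge0 => j _; rewrite -expr2 sqr_ge0.
Qed.

Lemma dotp_self_ge0 v : 0 <= dotp v v.
Proof. by rewrite dotpE; apply: sumr_ge0 => j _; rewrite -expr2 sqr_ge0. Qed.

Lemma dotp_self_le v : dotp v v <= n%:R * `|v| ^+ 2.
Proof.
rewrite dotpE -[n in n%:R]card_ord -sum1_card natr_sum mulr_suml.
apply: ler_sum => j _; rewrite mul1r -expr2 -real_normK ?num_real //.
by apply: lerXn2r; rewrite ?nnegrE //; apply: coord_le_normr.
Qed.

Lemma normrM_coord_le_dotp v i j : `|v 0 i| * `|v 0 j| <= dotp v v.
Proof.
have := sqr_coord_le_dotp v i; have := sqr_coord_le_dotp v j.
rewrite -(real_normK (num_real (v 0 i))) -(real_normK (num_real (v 0 j))).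
move: (normr_ge0 (v 0 i)) (normr_ge0 (v 0 j)) (dotp_self_ge0 v).
move: `|v 0 i| `|v 0 j| (dotp v v) => a b S a0 b0 S0 bS aS; nra.
Qed.

Lemma dotp_linear_le (L : {linear 'rV[R]_n -> 'rV[R]_n}) :
  exists2 alpha, 0 < alpha & forall v, dotp (L v) v <= alpha * dotp v v.
Proof.
pose C := \sum_i \sum_j `|L 'e_j 0 i|.
have C0 : 0 <= C by apply: sumr_ge0 => i _; apply: sumr_ge0.
exists (1 + C) => [|v]; first by rewrite ltr_wpDr.
apply: le_trans (_ : C * dotp v v <= _); last by rewrite ler_wpM2r ?dotp_self_ge0 ?lerDr.
have Lv i : L v 0 i = \sum_j v 0 j * L 'e_j 0 i.
  rewrite {1}(row_sum_delta v) linear_sum summxE.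
  by apply: eq_bigr => j _; rewrite linearZ mxE.
rewrite dotpE mulr_suml; apply: ler_sum => i _.
rewrite Lv !mulr_suml; apply: ler_sum => j _.
apply: le_trans (ler_norm _) _; rewrite mulrAC normrM normrM mulrC.
by rewrite ler_wpM2l // normrM_coord_le_dotp.
Qed.

End DotProduct.



Section RealMeanValue.
Variable R : realType.

Lemma MVT_le (g : R -> R) a b c K : a <= b ->
  (forall r, a <= r <= b -> derivable g r 1 /\ `|derive1 g r - c| <= K) ->
  `|g b - g a - c * (b - a)| <= K * (b - a).
Proof.
move=> ab gK.
have gd : forall r, r \in `]a, b[ -> is_derive r 1 g (derive1 g r).
  move=> r; rewrite in_itv /= => /andP[ar rb].
  have [dr _] := gK r (introT andP (conj (ltW ar) (ltW rb))).
  by rewrite derive1E; apply: derivableP.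
have gc : {within `[a, b], continuous g}.
  apply: derivable_within_continuous => r; rewrite in_itv /= => /andP[ar rb].
  by have [] := gK r (introT andP (conj ar rb)).
have [r rab ->] := MVT_segment ab gd gc.
rewrite -mulrBl normrM (ger0_norm (x := b - a)) ?subr_ge0 //.
apply: ler_wpM2r; first by rewrite subr_ge0.
by move: rab; rewrite in_itv /= => /gK [].
Qed.

Lemma increment_le (g : R -> R) c K b :
  (forall r, `|r| <= `|b| -> derivable g r 1 /\ `|derive1 g r - c| <= K) ->
  `|g b - g 0 - c * b| <= K * `|b|.
Proof.
move=> gK; have [b0|b0] := leP 0 b.
  have := @MVT_le g 0 b c K b0; rewrite !subr0 (ger0_norm b0).
  apply=> r /andP[r0 rb]; apply: gK.
  by rewrite !ger0_norm // (le_trans r0 rb).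
rewrite (ltr0_norm b0) -normrN.
have -> : - (g b - g 0 - c * b) = g 0 - g b - c * (0 - b) by ring.
have -> : K * - b = K * (0 - b) by rewrite sub0r.
apply: MVT_le (ltW b0) _ => r /andP[br r0]; apply: gK.
by rewrite !ler0_norm ?lerN2 // ltW.
Qed.

End RealMeanValue.

Lemma derive_line (R : realType) (V W : normedModType R) (G : V -> W) (z v : V) r :
  derivable G (r *: v + z) v ->
  derivable (fun s : R => G (s *: v + z)) r 1 /\
  'D_1 (fun s : R => G (s *: v + z)) r = 'D_v G (r *: v + z).
Proof.
rewrite /derivable /derive.
suff -> : (fun h : R => h^-1 *: (((fun s : R => G (s *: v + z)) \o shift r) (h *: 1)
           - G (r *: v + z))) =
          (fun h : R => h^-1 *: ((G \o shift (r *: v + z)) (h *: v) - G (r *: v + z)))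
  by [].
apply/funext => h /=; congr (_ *: (G _ - _)).
by rewrite -[h *: 1]/(h * 1) mulr1 scalerDl addrA.
Qed.

Lemma derive1_diff_comp (R : realType) (V W : normedModType R) (q : R -> V)
    (F : V -> W) t :
  differentiable q t -> differentiable F (q t) ->
  derive1 (F \o q) t = 'd F (q t) (derive1 q t).
Proof.
move=> dq dF; rewrite derive1E (deriveE _ (differentiable_comp dq dF)).
by rewrite (diff_comp dq dF) /= -(deriveE _ dq) -derive1E.
Qed.

Section PartialDerivatives.
Variables (R : realType) (k : nat).
Implicit Types (z h : 'rV[R]_k) (l : 'I_k).

Lemma diff_partialsE (W : normedModType R) (G : 'rV[R]_k -> W) z v :
  differentiable G z -> 'd G z v = \sum_l v 0 l *: 'D_'e_l G z.
Proof.
move=> dG; rewrite {1}(row_sum_delta v) linear_sum; apply: eq_bigr => l _.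
by rewrite linearZ /= deriveE.
Qed.

Lemma diff_gradE (f : 'rV[R]_k -> R^o) z v :
  differentiable f z -> 'd f z v = dotp (grad f z) v.
Proof.
move=> df; rewrite diff_partialsE // dotpE; apply: eq_bigr => l _.
by rewrite mxE deriveE // mulrC.
Qed.

Lemma grad_eq (f : 'rV[R]_k -> R^o) z c :
  (forall v, 'd f z v = dotp c v) -> grad f z = c.
Proof. by move=> dfc; apply/rowP => l; rewrite mxE dfc dotp_delta. Qed.



Definition rV_prefix (i : nat) h : 'rV[R]_k :=
  \row_l (if (l < i)%N then h 0 l else 0).

Lemma rV_prefix0 h : rV_prefix 0 h = 0.
Proof. by apply/rowP => l; rewrite !mxE. Qed.

Lemma rV_prefix_full h : rV_prefix k h = h.
Proof. by apply/rowP => l; rewrite !mxE ltn_ord. Qed.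

Lemma rV_prefixS l h : rV_prefix l.+1 h = rV_prefix l h + h 0 l *: 'e_l.
Proof.
apply/rowP => l'; rewrite !mxE eqxx /= ltnS leq_eqVlt.
have [->|l'l] := eqVneq l' l; first by rewrite eqxx ltnn mulr1 add0r.
have /negbTE -> : (l' : nat) != l by [].
by rewrite mulr0 addr0.
Qed.

Lemma normr_rV_prefixD l h s :
  `|s| <= `|h| -> `|rV_prefix l h + s *: 'e_l| <= `|h|.
Proof.
move=> sh; apply: normr_le_coords => // i l'; rewrite ord1 !mxE eqxx /=.
have [->|l'l] := eqVneq l' l; first by rewrite ltnn mulr1 add0r.
rewrite mulr0 addr0; case: ifP => _; last by rewrite normr0.
exact: coord_le_normr.
Qed.

Lemma partial_increment_le (G : 'rV[R]_k -> R) z d l (c ep : R) h :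
  (forall u, ball z d u ->
     derivable G u 'e_l /\ `|'D_'e_l G u - c| <= ep) ->
  `|h| < d ->
  `|G (rV_prefix l.+1 h + z) - G (rV_prefix l h + z) - h 0 l * c| <= ep * `|h|.
Proof.
move=> Gd hd; set w := rV_prefix l h + z.
have ep0 : 0 <= ep.
  have [_] := Gd z (ballxx _ (le_lt_trans (normr_ge0 h) hd)).
  exact: le_trans.
have -> : rV_prefix l.+1 h + z = h 0 l *: 'e_l + w.
  by rewrite rV_prefixS /w addrAC addrC.
have -> : G w = G (0 *: 'e_l + w) by rewrite scale0r add0r.
rewrite (mulrC (h 0 l)).
apply: le_trans (@increment_le _ (fun s => G (s *: 'e_l + w)) c ep (h 0 l) _) _.
  move=> s sh; have us : ball z d (s *: 'e_l + w).
    rewrite -ball_normE /= /w addrCA addrA opprD addrCA subrr addr0 normrN.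
    apply: le_lt_trans hd; apply: normr_rV_prefixD.
    exact: le_trans sh (coord_le_normr _ _ _).
  have [Gu Gc] := Gd _ us.
  have [D1 D2] := derive_line Gu.
  by rewrite derive1E D2.
by rewrite ler_wpM2l ?coord_le_normr.
Qed.

Theorem continuous_partials_differentiable (G : 'rV[R]_k -> R^o) z
    (g : 'I_k -> 'rV[R]_k -> R) :
  (\forall u \near z, forall l,
     derivable G u 'e_l /\ 'D_'e_l G u = g l u) ->
  (forall l, {for z, continuous (g l)}) ->
  differentiable G z.
Proof.
move=> Gd gc; pose c := \row_l g l z.
suff Ho : G \o shift z = cst (G z) + dotp c +o_ (0 : 'rV[R]_k) id.
  apply/diff_locallyP; rewrite (diff_unique (@dotp_continuous _ _ c) Ho).
  by split => //; apply: dotp_continuous.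
apply/eqaddoP => eps eps0.
(* [k.+1] rather than [k] keeps [ep] positive when [k = 0]. *)
pose ep := eps / k.+1%:R.
have ep0 : 0 < ep by rewrite divr_gt0 // ltr0Sn.
have gz l : \forall u \near z, `|g l z - g l u| <= ep.
  by move/cvgrPdist_le: (gc l) => /(_ ep ep0).
have /nbhs_ballP[d /= d0 Gz] : \forall u \near z, forall l,
    derivable G u 'e_l /\ `|'D_'e_l G u - g l z| <= ep.
  apply: (filterS2 _ _ Gd (filter_forall _ gz)) => u Gu gu l; have [Gul ->] := Gu l.
  by rewrite distrC gu.
apply/nbhs_ballP; exists d => // h; rewrite -ball_normE /= sub0r normrN => hd.
have telescope : G (h + z) - (G z + dotp c h) = \sum_(l < k)
    (G (rV_prefix l.+1 h + z) - G (rV_prefix l h + z) - h 0 l * g l z).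
  rewrite sumrB -(big_mkord (fun=> true)
    (fun i => G (rV_prefix i.+1 h + z) - G (rV_prefix i h + z))).
  rewrite telescope_sumr // rV_prefix_full rV_prefix0 add0r opprD addrA dotpE.
  by congr (_ - _); apply: eq_bigr => l _; rewrite mxE mulrC.
change (`|G (h + z) - (G z + dotp c h)| <= eps * `|h|); rewrite telescope.
apply: le_trans (ler_norm_sum _ _ _) _.
apply: le_trans (ler_sum _ (fun l _ =>
  partial_increment_le (fun u zu => Gz u zu l) hd)) _.
rewrite sumr_const card_ord -mulr_natl mulrA ler_wpM2r //.
by rewrite /ep mulrA ler_pdivrMr ?ltr0Sn // mulrC ler_wpM2l ?(ltW eps0) ?ler_nat.
Qed.

End PartialDerivatives.

Section SmoothCharts.
Variable R : realType.

Lemma iter_dir_deriv_rcons (V W : normedModType R) (vs : seq V) v (F : V -> W) :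
  iter_dir_deriv vs ('D_v F) = iter_dir_deriv (rcons vs v) F.
Proof. by elim: vs => //= v' vs ->. Qed.

Lemma smooth_on_derive (V W : normedModType R) (U : set V) (F : V -> W) v :
  smooth_on U F -> smooth_on U ('D_v F).
Proof. by move=> [Uo sF]; split => // vs; rewrite iter_dir_deriv_rcons. Qed.

Lemma differentiable_mx_coords (V : normedModType R) p q
    (F : V -> 'M[R]_(p, q)) z :
  (forall i j, differentiable (fun u => F u i j : R^o) z) -> differentiable F z.
Proof.
move=> dF; have -> : F = \sum_i \sum_j (fun u => F u i j *: delta_mx i j).
  apply/funext => u; rewrite [LHS](matrix_sum_delta (F u)) fct_sumE.
  by apply: eq_bigr => i _; rewrite fct_sumE.
apply: differentiable_sum => i; apply: differentiable_sum => j.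
exact: differentiableZl.
Qed.

Lemma smooth_on_differentiable m p q (U : set 'rV[R]_m)
    (F : 'rV[R]_m -> 'M[R]_(p, q)) z :
  smooth_on U F -> U z -> differentiable F z.
Proof.
move=> [Uo sF] Uz; apply: differentiable_mx_coords => i j.
apply: (@continuous_partials_differentiable _ _ _ z (fun l u => 'D_'e_l F u i j)).
  apply: filterS (open_nbhs_nbhs (conj Uo Uz)) => u Uu l.
  have dFu : derivable F u 'e_l := (sF [::]).1 u _ Uu.
  split; first by move/derivable_mxP: dFu.
  by rewrite (derive_mx dFu) mxE.
move=> l; have := (sF [:: 'e_l]).2; rewrite continuous_open_subspace //.
move=> /(_ z); rewrite inE => /(_ Uz) DFz.
exact: continuous_comp DFz (@coord_continuous _ _ _ i j _).
Qed.

Lemma derivable_mx_scale p q (a : R -> R) (B : R -> 'M[R]_(p, q)) t :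
  derivable a t 1 -> derivable B t 1 -> derivable (fun s => a s *: B s) t 1.
Proof.
move=> da /derivable_mxP dB; apply/derivable_mxP => i j.
rewrite (_ : (fun s => _) = a * (fun s => B s i j)); last first.
  by apply/funext => s; rewrite mxE.
exact: derivableM da (dB i j).
Qed.

Lemma smooth_curve_comp_twice_derivable m n (M : topologicalType)
    (A : set (chart R m M)) (phi : M -> 'rV[R]_n) (c : R^o -> M) t :
  smooth_atlas A -> smooth_map A phi -> smooth_curve A c ->
  derivable (phi \o c) t 1 /\ derivable (derive1 (phi \o c)) t 1.
Proof.
move=> [_ _ Achart Acover _] sphi [_ sc].
have [a Aa cta] := Acover (c t).
have [_ _ cinvK _ _] := Achart a Aa.
have [Uo sq] := sc a Aa; have sF := sphi a Aa.
set U := c @^-1` cdom a in Uo sq cta; set q := cmap a \o c in sq.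
set F := phi \o cinv a in sF.
have nearU s : U s -> \forall s' \near s, U s' by move=> Us; exact: open_nbhs_nbhs.
have qU s : U s -> (cmap a @` cdom a) (q s) by move=> Us; exists (c s).
have FqE s : U s -> {near s, F \o q =1 phi \o c}.
  by move=> /nearU; apply: filterS => s' Us'; rewrite /F /q /= cinvK.
have dq s : U s -> differentiable q s.
  by move=> Us; apply/derivable1_diffP; exact: (sq [::]).1.
have dFq s : U s -> differentiable (F \o q) s.
  move=> Us; apply: differentiable_comp (dq s Us) _.
  exact: smooth_on_differentiable sF (qU s Us).
have DFq s : U s -> derive1 (phi \o c) s = \sum_l derive1 q s 0 l *: 'D_'e_l F (q s).
  move=> Us; have dFs := smooth_on_differentiable sF (qU s Us).
  rewrite derive1E -(near_eq_derive _ (FqE s Us)) -derive1E.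
  by rewrite (derive1_diff_comp (dq s Us) dFs) diff_partialsE.
split; first by apply: near_eq_derivable (FqE t cta) _; apply/derivable1_diffP/dFq.
have DFqE : {near t, \sum_l (fun s => derive1 q s 0 l *: 'D_'e_l F (q s)) =1
                     derive1 (phi \o c)}.
  by apply: filterS (nearU t cta) => s Us; rewrite fct_sumE DFq.
apply: near_eq_derivable DFqE _.
apply: derivable_sum => l; apply: derivable_mx_scale.
  have dq' : derivable (derive1 q) t 1.
    have -> : derive1 q = 'D_1 q by apply: funext => s; rewrite derive1E.
    exact: (sq [:: 1]).1.
  by move/derivable_mxP: dq'.
have sDF := smooth_on_derive 'e_l sF.
apply/derivable1_diffP.
exact: differentiable_comp (dq t cta) (smooth_on_differentiable sDF (qU t cta)).
Qed.

End SmoothCharts.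

Section SecondOrderChainRule.
Variables (R : realType) (n : nat).
Implicit Types (a b p : R -> 'rV[R]_n) (f : 'rV[R]_n -> R^o).

Lemma derive1_dotp a b t : derivable a t 1 -> derivable b t 1 ->
  derivable (fun s => dotp (a s) (b s) : R^o) t 1 /\
  derive1 (fun s => dotp (a s) (b s) : R^o) t =
    dotp (derive1 a t) (b t) + dotp (a t) (derive1 b t).
Proof.
move=> da db.
have daj j : derivable (fun s => a s 0 j) t 1 by move/derivable_mxP: da.
have dbj j : derivable (fun s => b s 0 j) t 1 by move/derivable_mxP: db.
have -> : (fun s => dotp (a s) (b s) : R^o) =
          \sum_j ((fun s => a s 0 j) * (fun s => b s 0 j)).
  by apply/funext => s; rewrite dotpE fct_sumE.
split; first by apply: derivable_sum => j; apply: derivableM.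
rewrite derive1E derive_sum => [|j]; last exact: derivableM.
rewrite !dotpE -big_split; apply: eq_bigr => j _ /=.
rewrite (deriveM (daj j) (dbj j)) !derive1E (derive_mx da) (derive_mx db) !mxE.
by rewrite addrC; congr (_ + _); exact: mulrC.
Qed.

Lemma derive1_comp_grad f p t : differentiable f (p t) -> derivable p t 1 ->
  derive1 (f \o p) t = dotp (grad f (p t)) (derive1 p t).
Proof.
by move=> df /derivable1_diffP dp; rewrite derive1_diff_comp // diff_gradE.
Qed.

Lemma derive2_comp f p t : twice_differentiable f ->
  (\forall s \near t, derivable p s 1) -> derivable (derive1 p) t 1 ->
  derive1 (derive1 (f \o p)) t =
    dotp ('d (grad f) (p t) (derive1 p t)) (derive1 p t)
    + dotp (grad f (p t)) (derive1 (derive1 p) t).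
Proof.
move=> [df dgf] dp dp2; have /derivable1_diffP dpt := nbhs_singleton dp.
have dgp : differentiable (grad f \o p) t := differentiable_comp dpt (dgf _).
have Dgp : derive1 (grad f \o p) t = 'd (grad f) (p t) (derive1 p t).
  exact: derive1_diff_comp dpt (dgf _).
have Dfp : {near t, (fun s => dotp ((grad f \o p) s) (derive1 p s) : R^o) =1
                    derive1 (f \o p)}.
  by apply: filterS dp => s dps; rewrite derive1_comp_grad.
rewrite derive1E -(near_eq_derive _ Dfp) -derive1E -Dgp.
have dgp1 : derivable (grad f \o p) t 1 by apply/derivable1_diffP.
by have [_ ->] := derive1_dotp dgp1 dp2.
Qed.

End SecondOrderChainRule.

Lemma diff_quadratic_remainder (R : realType) (V W : normedModType R)
    (f : V -> W) u (L : {linear V -> W}) K :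
  continuous L -> (forall h, `|f (h + u) - f u - L h| <= K * `|h| ^+ 2) ->
  differentiable f u /\ 'd f u = L :> (V -> W).
Proof.
move=> Lc fK.
have Ho : f \o shift u = cst (f u) + L +o_ (0 : V) id.
  apply/eqaddoP => eps eps0; pose d := eps / (`|K| + 1).
  have d0 : 0 < d by rewrite divr_gt0 // ltr_wpDl.
  apply/nbhs_ballP; exists d => // h; rewrite -ball_normE /= sub0r normrN => hd.
  change (`|f (h + u) - (f u + L h)| <= eps * `|h|).
  rewrite opprD addrA; apply: le_trans (fK h) _.
  rewrite expr2 mulrA ler_wpM2r //; apply: le_trans (_ : (`|K| + 1) * `|h| <= _).
    by rewrite ler_wpM2r // (le_trans (ler_norm K)) // lerDl.
  by rewrite mulrC -ler_pdivlMr ?ltr_wpDl // ltW.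
have dfu := diff_unique Lc Ho.
by split => //; apply/diff_locallyP; rewrite dfu.
Qed.

Section QuadraticModel.
Variables (R : realType) (n : nat).
Implicit Types (w x u v : 'rV[R]_n) (alpha : R).

Definition quad_model w x alpha : 'rV[R]_n -> R^o :=
  fun x' => dotp w x' + alpha / 2 * dotp (x' - x) (x' - x).

Lemma quad_model_diff w x alpha u :
  differentiable (quad_model w x alpha) u /\
  'd (quad_model w x alpha) u = dotp (w + alpha *: (u - x)) :> (_ -> _).
Proof.
apply: (@diff_quadratic_remainder _ _ _ _ _ _ (`|alpha| / 2 * n%:R)).
  exact: dotp_continuous.
move=> h; have -> : quad_model w x alpha (h + u) - quad_model w x alpha u
    - dotp (w + alpha *: (u - x)) h = alpha / 2 * dotp h h.
  rewrite /quad_model !dotpE !mulr_sumr -!big_split /= -!sumrB.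
  apply: eq_bigr => j _; rewrite !mxE.
  by move: (w 0 j) (h 0 j) (u 0 j) (x 0 j) => a b c d; field.
have half_ge0 : 0 <= (2 : R)^-1 by rewrite invr_ge0 ler0n.
rewrite normrM (ger0_norm (dotp_self_ge0 h)) normrM (ger0_norm half_ge0).
rewrite -[leRHS]mulrA.
by rewrite ler_wpM2l ?dotp_self_le // mulr_ge0.
Qed.

Lemma grad_quad_model w x alpha u :
  grad (quad_model w x alpha) u = w + alpha *: (u - x).
Proof. by apply: grad_eq => v; rewrite (quad_model_diff w x alpha u).2. Qed.

Lemma diff_grad_quad_model w x alpha u :
  differentiable (grad (quad_model w x alpha)) u /\
  'd (grad (quad_model w x alpha)) u = *:%R alpha :> (_ -> _).
Proof.
have -> : grad (quad_model w x alpha) = fun u => w + alpha *: (u - x).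
  by apply/funext => u'; rewrite grad_quad_model.
apply: (@diff_quadratic_remainder _ _ _ _ _ _ 0); first exact: scaler_continuous.
move=> h; rewrite mul0r normr_le0 subr_eq0 addrAC addrC; apply/eqP.
by rewrite opprD addNKr -scalerBr -(addrA h) addrK.
Qed.

Lemma quad_model_twice_differentiable w x alpha :
  twice_differentiable (quad_model w x alpha).
Proof.
split => u; first by case: (quad_model_diff w x alpha u).
by case: (diff_grad_quad_model w x alpha u).
Qed.


End QuadraticModel.

Section TwoImpliesOne.
Variables (R : realType) (m n : nat) (M : topologicalType).
Variables (A : set (chart R m M)) (phi : M -> 'rV[R]_n) (y : M).

Lemma not_two_implies_one_W_set :
  ~ two_implies_one A phi y ->
  exists w, W_set A phi y w /\ ~ dual_cone (tangent_cone (phi @` setT) (phi y)) w.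
Proof.
move=> not21; apply: contrapT => noW; apply: not21 => f f2 fcrit.
by apply: contrapT => fnstat; apply: noW; exists (grad f (phi y)); split => //; exists f.
Qed.

Lemma two_critical_quad_model (f0 : 'rV[R]_n -> R^o) alpha :
  smooth_atlas A -> smooth_map A phi ->
  twice_differentiable f0 -> two_critical A phi f0 y ->
  (forall v, dotp ('d (grad f0) (phi y) v) v <= alpha * dotp v v) ->
  two_critical A phi (quad_model (grad f0 (phi y)) (phi y) alpha) y.
Proof.
move=> sA sphi f02 f0crit f0hess c sc c0 h; rewrite {}/h.
have [f0'0 f0''0] := f0crit c sc c0.
have dp s := (smooth_curve_comp_twice_derivable s sA sphi sc).1.
have dp2 := (smooth_curve_comp_twice_derivable 0 sA sphi sc).2.
have dpnear : \forall s \near (0 : R), derivable (phi \o c) s 1.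
  by near=> s; exact: dp.
set f := quad_model _ _ _.
have f2 : twice_differentiable f := quad_model_twice_differentiable _ _ _.
rewrite -/(f0 \o (phi \o c)) in f0'0 f0''0; rewrite -/(f \o (phi \o c)).
rewrite (derive1_comp_grad (f02.1 _) (dp 0)) in f0'0.
rewrite (derive1_comp_grad (f2.1 _) (dp 0)).
rewrite (derive2_comp f02 dpnear dp2) in f0''0.
rewrite (derive2_comp f2 dpnear dp2).
rewrite /= c0 grad_quad_model subrr scaler0 addr0 (diff_grad_quad_model _ _ _ _).2 dotpZl.
rewrite /= c0 in f0'0 f0''0; split => //.
by apply: le_trans f0''0 _; rewrite lerD2r f0hess.
Unshelve. all: by end_near. Qed.

End TwoImpliesOne.

Theorem corollary3p18 (R : realType) (m n : nat) (M : topologicalType)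
  (A : set (chart R m M)) (phi : M -> 'rV[R]_n) (y : M) :
  smooth_atlas A -> smooth_map A phi -> ~ two_implies_one A phi y ->
  let x := phi y in
  let Tstar := dual_cone (tangent_cone (phi @` setT) x) in
  (exists w, W_set A phi y w /\ ~ Tstar w) /\
  (forall w, W_set A phi y w -> ~ Tstar w ->
     exists2 alpha : R, 0 < alpha &
       let f : 'rV[R]_n -> R^o :=
         fun x' => dotp w x' + alpha / 2 * dotp (x' - x) (x' - x) in
       two_critical A phi f y /\ ~ stationary (phi @` setT) f x).
Proof.
move=> sA sphi not21 x Tstar; split; first exact: not_two_implies_one_W_set.
move=> w [f0 [f02 f0w f0crit]] wTstar.
have [alpha alpha0 f0hess] := dotp_linear_le ('d (grad f0) x).
exists alpha => [//|f]; split.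
  by rewrite /f -f0w; apply: two_critical_quad_model.
by rewrite /stationary (grad_quad_model w x alpha x) subrr scaler0 addr0.
Qed.
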